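(* Let $(Q,f)$ be a triangulation quiver with at least three vertices. Then $Q$ contains a loop $\alpha$ with $f(\alpha)=\alpha$ if and only if $(Q,f)=(Q(S,\vec T),f)$ for a directed triangulated surface $(S,\vec T)$ where $S$ has non-empty boundary.
   Context: A triangulation quiver is a pair $(Q,f)$ where $Q$ is a finite connected quiver in which every vertex is the source of exactly two arrows and the target of exactly two arrows, and $f:Q_1\to Q_1$ is a permutation with $s(f(\alpha))=t(\alpha)$ for all arrows and $f^3=\mathrm{id}$. A surface is a connected compact 2-dimensional real manifold (orientable or not, with or without boundary). A triangulation $T$ of $S$ is a finite 2-dimensional cell complex structure on $S$ such that the closure of each 2-cell (a triangle) has boundary consisting of three pairwise different edges, or of two different edges one of which is self-folded; each edge is an edge of exactly two triangles, or is self-folded, or lies on the boundary; $T$ has at least three pairwise different edges. A directed triangulated surface $(S,\vec T)$ fixes an orientation $(abc)$ or $(aab)$ of each triangle. Its quiver $(Q(S,\vec T),f)$ has the edges as vertices; a triangle $(abc)$ with distinct edges gives $\alpha:a\to b,\beta:b\to c,\gamma:c\to a$ with $f$ cycling them; a self-folded $(aab)$ gives a loop $\alpha$ at $a$, $\beta:a\to b$, $\gamma:b\to a$ with $f:\alpha\mapsto\beta\mapsto\gamma\mapsto\alpha$; a boundary edge $a$ gives a loop at $a$ fixed by $f$. Equality is up to isomorphism compatible with $f$. *)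

From mathcomp Require Import all_boot.
Set Implicit Arguments. Unset Strict Implicit. Unset Printing Implicit Defensive.

Record quiver := Quiver {
  qv : finType;
  qa : finType;
  qs : qa -> qv;
  qt : qa -> qv
}.

Definition qadj (Q : quiver) : rel (qv Q) :=
  fun x y => [exists a : qa Q,
     ((qs a == x) && (qt a == y)) || ((qs a == y) && (qt a == x))].

Definition quiver_connected (Q : quiver) : Prop :=
  forall x y : qv Q, connect (@qadj Q) x y.

Definition triangulation_quiver (Q : quiver) (f : qa Q -> qa Q) : Prop :=
  quiver_connected Q /\
  (forall x : qv Q, #|[set a : qa Q | qs a == x]| = 2) /\
  (forall x : qv Q, #|[set a : qa Q | qt a == x]| = 2) /\
  (forall a : qa Q, qs (f a) = qt a) /\
  (forall a : qa Q, f (f (f a)) = a).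

Definition tq_iso (Q : quiver) (f : qa Q -> qa Q)
                  (Q' : quiver) (f' : qa Q' -> qa Q') : Prop :=
  exists (phv : qv Q -> qv Q') (pha : qa Q -> qa Q'),
    bijective phv /\ bijective pha /\
    (forall a, qs (pha a) = phv (qs a)) /\
    (forall a, qt (pha a) = phv (qt a)) /\
    (forall a, pha (f a) = f' (pha a)).

(** A directed triangulated surface is given by a finite set of triangles
   [dtri], a finite set of edges [dedge], and for every triangle [t] the
   cyclically ordered triple of its sides [dside t 0, dside t 1, dside t 2]
   (this cyclic order is the chosen orientation (abc) resp. (aab)).
   The surface S is obtained by gluing the triangles along sides carrying
   the same edge. *)

Record dtsurface := DTSurface {
  dtri : finType;
  dedge : finType;
  dside : dtri -> 'I_3 -> dedge
}.

Definition dmult (D : dtsurface) (e : dedge D) : nat :=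
  #|[set p : dtri D * 'I_3 | dside p.1 p.2 == e]|.

Definition dadj (D : dtsurface) : rel (dtri D) :=
  fun t u => [exists i : 'I_3, exists j : 'I_3, dside t i == dside u j].

Definition is_dtsurface (D : dtsurface) : Prop :=
  (* each edge is an edge of exactly two triangles, or self-folded
     (two sides of one triangle), or lies on the boundary (one side) *)
  (forall e : dedge D, dmult e = 1 \/ dmult e = 2) /\
  3 <= #|dedge D| /\
  (forall t u : dtri D, connect (@dadj D) t u).

Definition dboundary (D : dtsurface) (e : dedge D) : bool := dmult e == 1.

Definition has_boundary (D : dtsurface) : Prop := exists e : dedge D, dboundary e.

Definition dq_arrow (D : dtsurface) : finType :=
  ((dtri D * 'I_3) + {e : dedge D | dboundary e})%type.

Definition dq_src (D : dtsurface) (a : dq_arrow D) : dedge D :=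
  match a with
  | inl p => dside p.1 p.2
  | inr e => val e
  end.

Definition dq_tgt (D : dtsurface) (a : dq_arrow D) : dedge D :=
  match a with
  | inl p => dside p.1 (ordS p.2)
  | inr e => val e
  end.

Definition QST (D : dtsurface) : quiver :=
  @Quiver (dedge D) (dq_arrow D) (@dq_src D) (@dq_tgt D).

Definition fST (D : dtsurface) (a : qa (QST D)) : qa (QST D) :=
  match a with
  | inl p => inl (p.1, ordS p.2)
  | inr e => inr e
  end.

From mathcomp Require Import all_boot zify.
Set Implicit Arguments. Unset Strict Implicit. Unset Printing Implicit Defensive.

(* A triangulation quiver is its own gluing data: its vertices are the edges,
   each f-orbit of length 3 is a triangle whose sides are the sources of its
   three arrows, and each f-fixed arrow is a loop marking a boundary edge.
   Of the two arrows leaving a vertex at most one is fixed, so every edge is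
   carried by one or two triangle sides, by exactly one when its vertex has a
   fixed loop.
   Conversely, a boundary edge is a fixed loop of Q(S,T), and isomorphisms
   transport fixed loops. *)

Section OrderThreeOrbits.

Variables (T : finType) (f : T -> T).
Hypothesis fK3 : forall a, f (f (f a)) = a.

Lemma order3_inj : injective f.
Proof. exact: (can_inj (g := f \o f)). Qed.

Lemma iter_fixed n a : (f (iter n f a) == iter n f a) = (f a == a).
Proof. by elim: n => //= n <-; rewrite (inj_eq order3_inj). Qed.

Lemma order_nonfixed a : f a != a -> order f a = 3.
Proof.
move=> /eqP nfa.
have f2a : f (f a) != a by apply/eqP=> f2a; apply: nfa; rewrite -[in RHS](fK3 a) f2a.
have f2af : f a != f (f a) by apply/eqP=> /order3_inj /esym.
have cyc : fcycle f [:: a; f a; f (f a)] by rewrite /= fK3 !eqxx.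
have uniq3 : uniq [:: a; f a; f (f a)].
  by rewrite /= !inE negb_or !(eq_sym a) f2a f2af !andbT; apply/eqP.
by rewrite (order_cycle cyc uniq3 (mem_head _ _)).
Qed.

Definition tri_root (a : T) : bool := froots f a && (f a != a).

Local Notation tri := {a : T | tri_root a}.

Definition corner (p : tri * 'I_3) : T := iter p.2 f (val p.1).

Lemma corner_nonfixed p : f (corner p) != corner p.
Proof. by rewrite /corner iter_fixed; case/andP: (valP p.1). Qed.

Lemma corner_ordS t i : corner (t, ordS i) = f (corner (t, i)).
Proof. by case: i => [[|[|[|//]]] ?] //=; rewrite fK3. Qed.

Lemma corner_surj a : f a != a -> exists p, corner p = a.
Proof.
move=> nfa; set r := froot f a.
have ra : fconnect f r a by rewrite fconnect_sym ?connect_root //; exact: order3_inj.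
have nfr : f r != r by rewrite -(iter_fixed (findex f r a)) iter_findex.
have rr : tri_root r.
  by rewrite /tri_root nfr andbT; apply: roots_root; apply: fconnect_sym order3_inj.
have ltr : findex f r a < 3 by rewrite -(order_nonfixed nfr) findex_max.
by exists (exist _ r rr, Ordinal ltr); rewrite /corner /= iter_findex.
Qed.

Lemma corner_inj : injective corner.
Proof.
have symf := fconnect_sym order3_inj.
move=> [t i] [u j]; rewrite /corner /= => Etu.
have tu : fconnect f (val t) (val u).
  by apply: connect_trans (fconnect_iter f i _) _; rewrite Etu symf fconnect_iter.
have Etu_tri : t = u.
  have /andP [/eqP rt _] := valP t; have /andP [/eqP ru _] := valP u.
  by apply: val_inj; rewrite -rt -ru; apply/(rootP symf); exact: tu.
subst u; congr (_, _); apply: val_inj.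
have ord3 : order f (val t) = 3 by apply: order_nonfixed; case/andP: (valP t).
have findex_corner (k : 'I_3) : findex f (val t) (iter k f (val t)) = k.
  by rewrite findex_iter ?ord3.
by rewrite -[LHS]findex_corner Etu findex_corner.
Qed.

End OrderThreeOrbits.

Lemma tq_iso_sym (Q Q' : quiver) (f : qa Q -> qa Q) (f' : qa Q' -> qa Q') :
  tq_iso f f' -> tq_iso f' f.
Proof.
move=> [phv [pha [[phv' phvK phvK'] [[pha' phaK phaK'] [phs [pht phf]]]]]].
exists phv', pha'; split; first exact: Bijective phvK' phvK.
split; first exact: Bijective phaK' phaK.
split; [|split] => a.
- by apply: (can_inj phvK); rewrite -phs !phvK' phaK'.
- by apply: (can_inj phvK); rewrite -pht !phvK' phaK'.
- by apply: (can_inj phaK); rewrite phf !phaK'.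
Qed.

Lemma tq_iso_fixed_loop (Q Q' : quiver) (f : qa Q -> qa Q) (f' : qa Q' -> qa Q') :
  tq_iso f f' -> (exists a, qs a = qt a /\ f a = a) ->
  exists a', qs a' = qt a' /\ f' a' = a'.
Proof.
move=> [phv [pha [_ [_ [phs [pht phf]]]]]] [a [loop_a fa]].
by exists (pha a); rewrite phs pht loop_a -phf fa.
Qed.

Lemma boundary_fixed_loop (D : dtsurface) :
  has_boundary D -> exists b : qa (QST D), qs b = qt b /\ fST b = b.
Proof. by move=> [e be]; exists (inr (exist _ e be)). Qed.

Section TriangulationQuiverSurface.

Variables (Q : quiver) (f : qa Q -> qa Q).
Hypothesis conn : quiver_connected Q.
Hypothesis out2 : forall x : qv Q, #|[set a : qa Q | qs a == x]| = 2.
Hypothesis in2 : forall x : qv Q, #|[set a : qa Q | qt a == x]| = 2.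
Hypothesis src_f : forall a : qa Q, qs (f a) = qt a.
Hypothesis fK3 : forall a : qa Q, f (f (f a)) = a.
Hypothesis two_vertices : 1 < #|qv Q|.

Local Notation out x := [set a : qa Q | qs a == x].
Local Notation fixed := [set a : qa Q | f a == a].

Lemma fixed_loop a : f a = a -> qs a = qt a.
Proof. by move=> fa; rewrite -src_f fa. Qed.

(* Two fixed arrows leaving x are the two loops at x, so no other arrow
   touches x and connectivity leaves x as the only vertex. *)
Lemma fixed_arrow_unique a b : f a = a -> f b = b -> qs a = qs b -> a = b.
Proof.
move=> fa fb sab; apply/eqP/negPn/negP => nab; set x := qs a.
have out_x : out x = [set a; b].
  apply/esym/eqP; rewrite eqEcard out2 cards2 nab leqnn andbT.
  by apply/subsetP => c; rewrite !inE => /orP [] /eqP ->; rewrite /x ?sab.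
have out_in : out x = [set c | qt c == x].
  apply/eqP; rewrite eqEcard out2 in2 leqnn andbT.
  by apply/subsetP => c; rewrite out_x !inE => /orP [] /eqP ->;
    rewrite -fixed_loop /x ?sab.
have loop_x c : (qs c == x) = (qt c == x).
  by have := congr1 (fun A : {set qa Q} => c \in A) out_in; rewrite !inE.
have closed_x : closed (@qadj Q) (pred1 x).
  by move=> y z /existsP [c /orP [] /andP [/eqP <- /eqP <-]]; rewrite !inE loop_x.
have all_x y : y = x.
  by apply/eqP; rewrite -[_ == _]/(y \in pred1 x) -(closed_connect closed_x (conn x y)) inE.
have : #|qv Q| <= 1 by apply/card_le1_eqP => y z _ _; rewrite (all_x y) (all_x z).
by rewrite leqNgt two_vertices.
Qed.

Lemma card_out_fixed x : #|out x :&: fixed| <= 1.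
Proof.
apply/card_le1_eqP => a b; rewrite !inE => /andP [/eqP sa /eqP fa] /andP [/eqP sb /eqP fb].
by apply: fixed_arrow_unique; rewrite // sa sb.
Qed.

Lemma card_out_split x : #|out x :&: fixed| + #|out x :\: fixed| = 2.
Proof. by rewrite cardsID out2. Qed.

Definition tq_surface : dtsurface :=
  @DTSurface {a : qa Q | tri_root f a} (qv Q) (fun t i => qs (corner (t, i))).

Lemma dmult_tq_surface x : dmult (D := tq_surface) x = #|out x :\: fixed|.
Proof.
rewrite /dmult -(card_imset _ (corner_inj fK3)); apply: eq_card => a; rewrite !inE.
apply/imsetP/andP => [[[t i]] | [nfa /eqP <-]].
  by rewrite inE => /eqP <- ->; rewrite corner_nonfixed.
by have [[t i] <-] := corner_surj fK3 nfa; exists (t, i); rewrite ?inE.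
Qed.

Lemma dmult_tq_surface12 x : dmult (D := tq_surface) x = 1 \/ dmult (D := tq_surface) x = 2.
Proof.
by rewrite dmult_tq_surface; have := card_out_split x; have := card_out_fixed x; lia.
Qed.

Lemma dboundary_tq_surfaceP x :
  reflect (exists2 a, qs a = x & f a = a) (dboundary (D := tq_surface) x).
Proof.
have -> : dboundary (D := tq_surface) x = (0 < #|out x :&: fixed|).
  rewrite /dboundary dmult_tq_surface.
  by have := card_out_split x; have := card_out_fixed x; lia.
apply: (iffP card_gt0P) => [[a] | [a sa fa]].
  by rewrite !inE => /andP [/eqP sa /eqP fa]; exists a.
by exists a; rewrite !inE sa fa !eqxx.
Qed.

(* The vertices lying on some triangle connected to [t] form a closed set:
   an arrow either is a fixed loop or runs between two sides of a triangle. *)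
Lemma tq_surface_connected t u : connect (@dadj tq_surface) t u.
Proof.
pose near := [pred y | [forall w,
  [exists i, dside w i == y] ==> connect (@dadj tq_surface) t w]].
have near_side w i : (qs (corner (w, i)) \in near) = connect (@dadj tq_surface) t w.
  apply/forallP/idP => [tri_near | tw w'].
    by apply: (implyP (tri_near w)); apply/existsP; exists i.
  apply/implyP => /existsP [j /eqP ji]; apply: connect_trans tw (connect1 _).
  by apply/existsP; exists i; apply/existsP; exists j; rewrite ji.
have near_arrow a : (qs a \in near) = (qt a \in near).
  have [fa | nfa] := eqVneq (f a) a; first by rewrite fixed_loop.
  by have [[w i] <-] := corner_surj fK3 nfa; rewrite -src_f -(corner_ordS fK3) !near_side.
have closed_near : closed (@qadj Q) near.
  by move=> y z /existsP [a /orP [] /andP [/eqP <- /eqP <-]]; rewrite near_arrow.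
have := closed_connect closed_near (conn (qs (corner (t, ord0))) (qs (corner (u, ord0)))).
by rewrite !near_side connect0.
Qed.

Variable a0 : qa Q.

(* [a0] is a junk default: every boundary edge carries a fixed arrow. *)
Definition surface_arrow (b : qa (QST tq_surface)) : qa Q :=
  match b with
  | inl p => corner p
  | inr e => odflt a0 [pick a | (qs a == val e) && (f a == a)]
  end.

Lemma surface_arrow_boundary (e : {x | dboundary (D := tq_surface) x}) :
  qs (surface_arrow (inr e)) = val e /\ f (surface_arrow (inr e)) = surface_arrow (inr e).
Proof.
rewrite /=; case: pickP => [a /andP [/eqP -> /eqP ->] // | none].
have [a sa fa] := dboundary_tq_surfaceP _ (valP e).
by move: (none a); rewrite sa fa !eqxx.
Qed.

Lemma surface_arrow_src b : qs (surface_arrow b) = dq_src b.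
Proof. by case: b => // e; case: (surface_arrow_boundary e). Qed.

Lemma surface_arrow_f b : surface_arrow (fST b) = f (surface_arrow b).
Proof.
case: b => [[t i] | e]; first exact: corner_ordS.
by case: (surface_arrow_boundary e).
Qed.

Lemma surface_arrow_tgt b : qt (surface_arrow b) = dq_tgt b.
Proof. by rewrite -src_f -surface_arrow_f surface_arrow_src; case: b. Qed.

Lemma surface_arrow_inj : injective surface_arrow.
Proof.
have fixed_inr e : f (surface_arrow (inr e)) = surface_arrow (inr e).
  by case: (surface_arrow_boundary e).
case=> [p | e] [q | e'] E.
- by rewrite (corner_inj fK3 E).
- by move: (corner_nonfixed fK3 p); rewrite -/(surface_arrow (inl p)) E fixed_inr eqxx.
- by move: (corner_nonfixed fK3 q); rewrite -/(surface_arrow (inl q)) -E fixed_inr eqxx.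
- case: (surface_arrow_boundary e) => [se _]; case: (surface_arrow_boundary e') => [se' _].
  by congr inr; apply: val_inj; rewrite -se -se' E.
Qed.

Lemma surface_arrow_surj a : exists b, surface_arrow b = a.
Proof.
have [fa | nfa] := eqVneq (f a) a; last first.
  by have [p <-] := corner_surj fK3 nfa; exists (inl p).
have bx : dboundary (D := tq_surface) (qs a) by apply/dboundary_tq_surfaceP; exists a.
exists (inr (exist _ (qs a) bx)).
case: (surface_arrow_boundary (exist _ (qs a) bx)) => [src_a' fixed_a'].
exact: fixed_arrow_unique.
Qed.

Lemma surface_arrow_bij : bijective surface_arrow.
Proof.
have surj a : exists b, surface_arrow b == a by have [b <-] := surface_arrow_surj a; exists b.
pose g a := xchoose (surj a).
have gK : cancel g surface_arrow := fun a => eqP (xchooseP (surj a)).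
by apply: (Bijective _ gK) => b; apply: surface_arrow_inj; rewrite gK.
Qed.

Lemma tq_iso_surface : tq_iso (@fST tq_surface) f.
Proof.
exists id, surface_arrow; split; first by exists id.
split; first exact: surface_arrow_bij.
by split; [|split] => b; rewrite ?surface_arrow_src ?surface_arrow_tgt ?surface_arrow_f.
Qed.

End TriangulationQuiverSurface.

Theorem corollary4p12 (Q : quiver) (f : qa Q -> qa Q) :
  triangulation_quiver f ->
  3 <= #|qv Q| ->
  ((exists a : qa Q, qs a = qt a /\ f a = a) <->
   (exists D : dtsurface,
      is_dtsurface D /\ has_boundary D /\ tq_iso f (@fST D))).
Proof.
move=> [conn [out2 [in2 [src_f fK3]]]] three_vertices.
have two_vertices : 1 < #|qv Q| by apply: leq_trans three_vertices.
split=> [[a [_ fa]] | [D [_ [boundary_D iso_D]]]].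
- exists (tq_surface f); split; [|split].
  + split; [|split]; first exact: dmult_tq_surface12.
    * exact: three_vertices.
    * exact: tq_surface_connected.
  + by exists (qs a); apply/dboundary_tq_surfaceP => //; exists a.
  + exact/tq_iso_sym/(tq_iso_surface conn out2 in2 src_f fK3 two_vertices a).
- exact: tq_iso_fixed_loop (tq_iso_sym iso_D) (boundary_fixed_loop boundary_D).
Qed.
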